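(* Fix $j\ge1$, $\alpha>0$, $\ell>0$, $p\in\mathbb{N}$. In the modified GPORT with immigration $\mathcal{T}_{\alpha,\ell}$, let $B_{N,m}$ be the number of children of the root $0$ whose subtree has exactly $m$ nodes, after $N$ insertions. Let $(Z_{N,0},\dots,Z_{N,j+1})_{N\ge0}$ be the urn described in the context. Then the processes $\big(B_{N,1},\dots,B_{N,j}\big)_{N\ge0}$ and $\Big(\frac{Z_{N,1}}{(\alpha+1)-1},\frac{Z_{N,2}}{2(\alpha+1)-1},\dots,\frac{Z_{N,j}}{j(\alpha+1)-1}\Big)_{N\ge0}$ have the same law.
   Context: Modified GPORT with immigration $\mathcal{T}_{\alpha,\ell}$ (period $p$): at time $0$ a single root labelled $0$; at time $N$ there are ordinary nodes $1,\dots,N$, root $0$ and $\lfloor N/p\rfloor$ immigrant roots; node $N+1$ attaches to an ordinary node $v$ w.p. $(d(v)+\alpha)/C_N$ and to a root $v$ (root $0$ or immigrant) w.p. $(d(v)+\ell)/C_N$, $d(v)$ the out-degree, $C_N=(1+\alpha)N+(\lfloor N/p\rfloor+1)\ell$; after attaching node $N+1$, if $p\mid(N+1)$ a new isolated immigrant root is added. Urn with colours $0,1,\dots,j+1$ (real amounts): $Z_{0,\cdot}=(\ell,0,\dots,0)$. At draw number $N+1$ ($N\ge0$), colour $i$ is drawn w.p. $Z_{N,i}/\sum_{i'}Z_{N,i'}$. Drawing colour $0$: add $1$ to colour $0$ and $\alpha$ to colour $1$. Drawing colour $m$, $1\le m\le j$: remove $m(\alpha+1)-1$ from colour $m$ and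 add $(m+1)(\alpha+1)-1$ to colour $m+1$. Drawing colour $j+1$: add $1+\alpha$ to colour $j+1$. In addition, if $p\mid(N+1)$, add $\ell$ to colour $j+1$ (regardless of the drawn colour). *)

From mathcomp Require Import all_boot all_order all_algebra.
From mathcomp Require Import reals.
Set Implicit Arguments. Unset Strict Implicit. Unset Printing Implicit Defensive.
Import Order.TTheory GRing.Theory Num.Theory.
Local Open Scope ring_scope.

(* A vertex is either a root  [inl k]  (k = 0 : the root 0,               *)
(* k >= 1 : the k-th immigrant root, added after insertion k*p)           *)
(* or an ordinary node  [inr n]  (n >= 1).                                 *)
(* A history h : seq vertex records, at position n (0-based), the vertex  *)
(* to which ordinary node n+1 was attached.  size h = number of insertions*)
Definition vertex := (nat + nat)%type.
Definition root0 : vertex := inl 0%N.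

(* vertices available when attaching node N+1 (tree after N insertions) *)
Definition gport_choices (p N : nat) : seq vertex :=
  root0 :: [seq (inl k : vertex) | k <- iota 1 (N %/ p)]
        ++ [seq (inr n : vertex) | n <- iota 1 N].

Fixpoint gport_hists (p N : nat) : seq (seq vertex) :=
  match N with
  | 0 => [:: [::]]
  | N'.+1 => flatten [seq [seq rcons h v | v <- gport_choices p N']
                     | h <- gport_hists p N']
  end.

Definition outdeg (h : seq vertex) (v : vertex) : nat := count (pred1 v) h.

Section Gport.
Variables (R : realType) (alpha ell : R) (p : nat).

Definition gport_C (N : nat) : R :=
  (1 + alpha) * N%:R + ((N %/ p)%:R + 1) * ell.

Definition gport_trans (h : seq vertex) (v : vertex) : R :=
  match v with
  | inl _ => ((outdeg h v)%:R + ell) / gport_C (size h)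
  | inr _ => ((outdeg h v)%:R + alpha) / gport_C (size h)
  end.

Definition gport_weight (h : seq vertex) : R :=
  \prod_(n < size h) gport_trans (take n h) (nth root0 h n).
End Gport.

Fixpoint in_subtree (h : seq vertex) (f n u : nat) : bool :=
  match f with
  | 0 => false
  | f'.+1 => (n == u) ||
      match nth root0 h n.-1 with
      | inr k => in_subtree h f' k u
      | inl _ => false
      end
  end.

Definition subtree_size (h : seq vertex) (u : nat) : nat :=
  count (fun n => in_subtree h n n u) (iota 1 (size h)).

Definition gport_B (h : seq vertex) (m : nat) : nat :=
  count (fun u => (nth root0 h u.-1 == root0) && (subtree_size h u == m))
        (iota 1 (size h)).

Definition gport_traj (R : realType) (j : nat) (h : seq vertex) : seq (seq R) :=
  [seq [seq (gport_B (take n h) m)%:R | m <- iota 1 j] | n <- iota 0 (size h).+1].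

(* The urn with colours 0..j+1.  A history is the sequence of drawn colours. *)
Fixpoint urn_hists (j N : nat) : seq (seq nat) :=
  match N with
  | 0 => [:: [::]]
  | N'.+1 => flatten [seq [seq rcons h c | c <- iota 0 j.+2] | h <- urn_hists j N']
  end.

Section Urn.
Variables (R : realType) (alpha ell : R) (p j : nat).

Definition urn_init : nat -> R := fun i => if i == 0%N then ell else 0.

(* composition after draw number N+1, where colour c was drawn *)
Definition urn_step (N c : nat) (Z : nat -> R) : nat -> R := fun i =>
  Z i
  + (if c == 0%N then (if i == 0%N then 1 else if i == 1%N then alpha else 0)
     else if (c <= j)%N then
       (if i == c then - (c%:R * (alpha + 1) - 1)
        else if i == c.+1 then c.+1%:R * (alpha + 1) - 1 else 0)
     else (if i == j.+1 then 1 + alpha else 0))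
  + (if ((p %| N.+1)%N && (i == j.+1)) then ell else 0).

Fixpoint urn_state (h : seq nat) (n : nat) : nat -> R :=
  match n with
  | 0 => urn_init
  | n'.+1 => urn_step n' (nth 0%N h n') (urn_state h n')
  end.

Definition urn_weight (h : seq nat) : R :=
  \prod_(n < size h)
     (urn_state h n (nth 0%N h n) / \sum_(i < j.+2) urn_state h n i).

Definition urn_traj (h : seq nat) : seq (seq R) :=
  [seq [seq urn_state h n m / (m%:R * (alpha + 1) - 1) | m <- iota 1 j]
  | n <- iota 0 (size h).+1].
End Urn.

From mathcomp Require Import all_boot all_order all_algebra.
From mathcomp Require Import reals.
From mathcomp Require Import zify ring lra.
Import GRing.Theory Num.Theory.
Set Implicit Arguments. Unset Strict Implicit. Unset Printing Implicit Defensive.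

(* Colour each attachment of the tree process by where it lands: colour 0 for
   root 0, colour m <= j for a node of a branch (the subtree of a child of
   root 0) with m nodes, colour j+1 for anything else.  A branch with m nodes
   carries attachment weight m alpha + (m - 1) = m (alpha + 1) - 1, so the
   weight of colour 0 is d(0) + ell, that of colour m is B_m (m (alpha + 1) - 1),
   and all weights add up to C_N.  An attachment of colour c changes these
   weights exactly as drawing c changes the urn, so by induction the urn
   composition after the colour sequence of a tree history equals its colour
   weights.  Hence the colour sequence of the tree process is distributed as
   the sequence of urn draws, and B_{N,m} = Z_{N,m} / (m (alpha + 1) - 1) along
   this coupling. *)

Lemma iota1S n : iota 1 n.+1 = rcons (iota 1 n) n.+1.
Proof. by rewrite -(addn1 n) iotaD /= cats1 add1n addn1. Qed.

Lemma count_rcons T (a : pred T) s x : count a (rcons s x) = count a s + a x.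
Proof. by rewrite -cats1 count_cat /= addn0. Qed.

Lemma count_except1 (T : eqType) (a b : pred T) (s : seq T) x : uniq s -> x \in s ->
  {in predC1 x, a =1 b} -> count a s + b x = count b s + a x.
Proof.
elim: s => // y s IH /= /andP[ys us]; rewrite inE => xs ab.
have [e|yx] := eqVneq y x; first subst y.
  rewrite (@eq_in_count _ a b) => [|z zs]; first lia.
  by apply: ab; apply: contraNneq ys => <-.
move: xs; rewrite eq_sym (negbTE yx) /= => xs.
rewrite ab ?inE //; have := IH us xs ab; lia.
Qed.

Section SumPred1.
Variable V : nmodType.
Local Open Scope ring_scope.

Lemma sumr_pred1_seq (T : eqType) (s : seq T) (x : T) (F : T -> V) : uniq s ->
  \sum_(y <- s) (if y == x then F y else 0) = if x \in s then F x else 0.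
Proof.
elim: s => [|y s IH]; first by rewrite big_nil.
rewrite big_cons inE => /andP[ys us]; rewrite IH //.
by have [<-|_] := eqVneq y x; rewrite ?(negbTE ys) ?addr0 ?add0r.
Qed.

Lemma sumr_ord_pred1 n a (x : V) :
  \sum_(i < n) (if i == a :> nat then x else 0) = if (a < n)%N then x else 0.
Proof.
rewrite -(big_mkord xpredT (fun i => if i == a then x else 0)) /index_iota subn0.
by rewrite sumr_pred1_seq ?iota_uniq // mem_iota.
Qed.

Lemma sumr_ord_pred2 n a b (x y : V) : a != b ->
  \sum_(i < n) (if i == a :> nat then x else if i == b :> nat then y else 0)
  = (if (a < n)%N then x else 0) + (if (b < n)%N then y else 0).
Proof.
move=> ab; rewrite -!sumr_ord_pred1 -big_split /=; apply: eq_bigr => i _.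
by have [->|_] := eqVneq (i : nat) a; rewrite ?(negbTE ab) ?addr0 ?add0r.
Qed.
End SumPred1.

Definition parent (h : seq vertex) (n : nat) : vertex := nth root0 h n.-1.

Lemma parent_rcons h v n : 0 < n <= size h -> parent (rcons h v) n = parent h n.
Proof. by case: n => // n /= nh; rewrite /parent nth_rcons nh. Qed.

Lemma parent_new h v : parent (rcons h v) (size h).+1 = v.
Proof. by rewrite /parent nth_rcons ltnn eqxx. Qed.

(* [branch h n = Some u]: [u] is the child of root 0 whose subtree contains
   the ordinary node [n].  Parents of ordinary nodes are required to be
   smaller, so [n] steps of fuel suffice. *)
Fixpoint branchf (h : seq vertex) (f n : nat) : option nat :=
  if f is f'.+1 then
    match parent h n with
    | inl 0 => Some n
    | inl _ => None
    | inr k => if 0 < k < n then branchf h f' k else None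
    end
  else None.

Definition branch h n := branchf h n n.

Lemma branchf_fuel h f f' n : 0 < n <= f -> n <= f' -> branchf h f n = branchf h f' n.
Proof.
elim: f f' n => [|f IH] [|f'] n /andP[n0 nf] nf' //=; try lia.
case: (parent h n) => [[|k]|k] //.
case: ifP => // /andP[k0 kn]; apply: IH; lia.
Qed.

Lemma branchE h n : 0 < n -> branch h n =
  match parent h n with
  | inl 0 => Some n
  | inl _ => None
  | inr k => if 0 < k < n then branch h k else None
  end.
Proof.
case: n => // n _; rewrite /branch /=.
case: (parent h n.+1) => [[|k]|k] //.
case: ifP => // /andP[k0 kn]; apply: branchf_fuel; lia.
Qed.

Lemma branch_rcons h v n : 0 < n <= size h -> branch (rcons h v) n = branch h n.
Proof.
suff E f m : 0 < m <= size h -> branchf (rcons h v) f m = branchf h f m by exact: E.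
elim: f m => [|f IH] m /andP[m0 mh] //=.
rewrite parent_rcons ?m0 //; case: (parent h m) => [[|k]|k] //.
case: ifP => // /andP[k0 km]; apply: IH; lia.
Qed.

Lemma branch_some h n u : 0 < n -> branch h n = Some u -> (0 < u <= n) && (parent h u == root0).
Proof.
suff E f m : 0 < m -> branchf h f m = Some u -> (0 < u <= m) && (parent h u == root0).
  exact: E.
elim: f m => [|f IH] m m0 //=.
case e: (parent h m) => [[|k]|k] //; first by case=> <-; rewrite m0 leqnn e.
case: ifP => // /andP[k0 km] /(IH _ k0) /andP[/andP[u0 uk] ->].
by rewrite u0 (leq_trans uk (ltnW km)).
Qed.

Lemma branch_root_child h u : 0 < u -> parent h u = root0 -> branch h u = Some u.
Proof. by move=> u0 e; rewrite branchE // e. Qed.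

Lemma mem_gport_choices p N v : (v \in gport_choices p N) =
  match v with inl k => k <= N %/ p | inr n => 0 < n <= N end.
Proof.
rewrite /gport_choices inE mem_cat; case: v => k.
  rewrite (mem_map inl_inj) mem_iota.
  have -> : (inl k \in [seq (inr n : vertex) | n <- iota 1 N]) = false.
    by apply/negbTE/negP => /mapP[].
  rewrite orbF /root0 /=; case: k => [|k] //=; lia.
rewrite (mem_map (@inr_inj nat nat)) mem_iota.
have -> : (inr k \in [seq (inl n : vertex) | n <- iota 1 (N %/ p)]) = false.
  by apply/negbTE/negP => /mapP[].
rewrite /=; lia.
Qed.

Definition gport_valid p (h : seq vertex) :=
  all (fun i => nth root0 h i \in gport_choices p i) (iota 0 (size h)).

Lemma gport_valid_rcons p h v :
  gport_valid p (rcons h v) = gport_valid p h && (v \in gport_choices p (size h)).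
Proof.
rewrite /gport_valid size_rcons -addn1 iotaD all_cat /= andbT nth_rcons ltnn eqxx.
congr (_ && _); apply: eq_in_all => i; rewrite mem_iota /= => hi.
by rewrite nth_rcons hi.
Qed.

Lemma gport_valid_take p h n : gport_valid p h -> gport_valid p (take n h).
Proof.
move=> /allP vh; apply/allP => i; rewrite mem_iota size_take /= => hi.
have [hin hn] : i < size h /\ i < n by case: (ltnP n (size h)) hi; lia.
by rewrite nth_take // vh // mem_iota.
Qed.

Lemma gport_valid_parent p h n : gport_valid p h -> 0 < n <= size h ->
  match parent h n with inl k => k <= n.-1 %/ p | inr k => 0 < k < n end.
Proof.
move=> /allP vh /andP[n0 nh].
have /vh : n.-1 \in iota 0 (size h) by rewrite mem_iota; lia.
by rewrite mem_gport_choices /parent; case: (nth root0 h n.-1) => // k; lia.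
Qed.

Lemma gport_hists_valid p N h : h \in gport_hists p N -> size h = N /\ gport_valid p h.
Proof.
elim: N h => [|N IH] h; first by rewrite inE => /eqP ->.
case/flatten_mapP => h0 /IH[s0 v0] /mapP[v vin ->].
by rewrite size_rcons s0 gport_valid_rcons v0 s0.
Qed.

Lemma branch_new p h v : gport_valid p h -> v \in gport_choices p (size h) ->
  branch (rcons h v) (size h).+1 =
    match v with inl 0 => Some (size h).+1 | inl _ => None | inr k => branch h k end.
Proof.
move=> vh; rewrite mem_gport_choices branchE // parent_new.
by case: v => [[|k]|k] // /andP[k0 kn]; rewrite k0 ltnS kn /= branch_rcons ?k0.
Qed.

Definition branch_size h u := count (fun n => branch h n == Some u) (iota 1 (size h)).

Lemma branch_size_rcons h v u :
  branch_size (rcons h v) u = branch_size h u + (branch (rcons h v) (size h).+1 == Some u).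
Proof.
rewrite /branch_size size_rcons iota1S count_rcons; congr (_ + _).
by apply: eq_in_count => n; rewrite mem_iota => nh; rewrite branch_rcons //; lia.
Qed.

Lemma branch_size_new h : branch_size h (size h).+1 = 0.
Proof.
apply/eqP; rewrite eqn0Ngt -has_count; apply/hasPn => n; rewrite mem_iota => /andP[n0 nh].
by apply/negP => /eqP /(branch_some n0) /andP[/andP[_ ?] _]; lia.
Qed.

Lemma branch_size_gt0 h n u : 0 < n <= size h -> branch h n = Some u -> 0 < branch_size h u.
Proof.
move=> /andP[n0 nh] /(branch_some n0) /andP[/andP[u0 un] /eqP pu].
rewrite -has_count; apply/hasP; exists u; first by rewrite mem_iota; lia.
by rewrite branch_root_child.
Qed.

Definition nbranches h m :=
  count (fun u => (parent h u == root0) && (branch_size h u == m)) (iota 1 (size h)).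

Lemma in_subtree_branch p h u f n : gport_valid p h -> 0 < u -> parent h u = root0 ->
  0 < n <= f -> n <= size h -> in_subtree h f n u = (branch h n == Some u).
Proof.
move=> vh u0 pu; elim: f n => [|f IH] n /andP[n0 nf] nh /=; first lia.
have [->|nu] := eqVneq n u; first by rewrite branch_root_child // !eqxx.
rewrite branchE //; have := gport_valid_parent vh (n := n) ltac:(lia); rewrite /parent.
case: (nth root0 h n.-1) => [[|k]|k] /=.
- by move=> _; apply/esym/eqP => -[e]; rewrite e eqxx in nu.
- by [].
- by move=> kn; rewrite kn IH //; lia.
Qed.

Lemma gport_B_nbranches p h m : gport_valid p h -> gport_B h m = nbranches h m.
Proof.
move=> vh; apply: eq_in_count => u; rewrite mem_iota => /andP[u0 uh] /=.
rewrite -/(parent h u); case pu: (parent h u == root0) => //=; congr (_ == _).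
apply: eq_in_count => n; rewrite mem_iota => /andP[n0 nh].
by apply: (in_subtree_branch vh) => //; [apply/eqP | lia].
Qed.

Definition attach_class h (v : vertex) : option nat :=
  match v with
  | inl 0 => Some 0
  | inl _ => None
  | inr n => if branch h n is Some u then Some (branch_size h u) else None
  end.

(* An attachment of class [k] turns a branch with [k] nodes into one with
   [k+1] nodes; class 0 creates a new branch with one node. *)
Lemma nbranches_rcons p h v m : gport_valid p h -> v \in gport_choices p (size h) -> 0 < m ->
  nbranches (rcons h v) m + (attach_class h v == Some m)
  = nbranches h m + (attach_class h v == Some m.-1).
Proof.
move=> vh vin m0; have eqSome (a b : nat) : (Some a == Some b) = (a == b) by [].
rewrite /nbranches size_rcons iota1S count_rcons parent_new branch_size_rcons.
rewrite branch_size_new add0n (branch_new vh vin).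
set b := match v with inl 0 => _ | _ => _ end.
set Q := fun u => (parent h u == root0) && (branch_size h u == m).
have -> : count (fun u => (parent (rcons h v) u == root0) &&
                   (branch_size (rcons h v) u == m)) (iota 1 (size h))
        = count (fun u => (parent h u == root0) &&
                   (branch_size h u + (b == Some u) == m)) (iota 1 (size h)).
  apply: eq_in_count => u; rewrite mem_iota => uh.
  by rewrite /= parent_rcons ?branch_size_rcons ?(branch_new vh vin) //; lia.
rewrite {}/b; case: v vin => [[|k]|n] vin /=.
- rewrite (@eq_in_count _ _ Q) => [|u]; last first.
    by rewrite mem_iota eqSome => uh; rewrite (_ : _ == u = false) ?addn0 //; apply/eqP; lia.
  rewrite eqxx; move: (count Q _) => c; clear Q.
  by case: m m0 => [|[|m]] //= _; lia.
- by rewrite (@eq_in_count _ _ Q) ?addn0 // => u _; rewrite /= addn0.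
- move: vin; rewrite mem_gport_choices => /andP[n0 nh].
  case bn: (branch h n) => [u0|] /=; last first.
    by rewrite (@eq_in_count _ _ Q) ?addn0 // => u _; rewrite /= addn0.
  have /andP[/andP[u00 u0n] pu0] := branch_some n0 bn.
  rewrite !eqSome (_ : (branch_size h u0 == m.-1) = (branch_size h u0 + 1 == m)); last first.
    by apply/eqP/eqP; lia.
  set P := fun u => _ && (_ + (Some u0 == Some u) == m).
  have := @count_except1 _ P Q (iota 1 (size h)) u0 (iota_uniq _ _).
  rewrite mem_iota /P /Q pu0 eqxx /= addn0; apply; first lia.
  by move=> u; rewrite inE eqSome eq_sym => /negbTE ->; rewrite addn0.
Qed.

Lemma gport_choices_mono p N M : N <= M -> {subset gport_choices p N <= gport_choices p M}.
Proof.
move=> NM [k|k]; rewrite !mem_gport_choices; last lia.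
by move=> /leq_trans; apply; apply: leq_div2r.
Qed.

Lemma gport_valid_all p h N : gport_valid p h -> size h <= N -> all (mem (gport_choices p N)) h.
Proof.
elim/last_ind: h => [|h v IH] //; rewrite gport_valid_rcons size_rcons => /andP[vh vin] hN.
rewrite all_rcons /= (gport_choices_mono _ vin) ?IH //; lia.
Qed.

Lemma outdeg_rcons h v w : outdeg (rcons h v) w = outdeg h w + (v == w).
Proof. by rewrite /outdeg count_rcons /= eq_sym. Qed.

Lemma outdeg_new p h n : gport_valid p h -> size h < n -> outdeg h (inr n) = 0.
Proof.
move=> vh hn; apply/count_memPn/negP => /(allP (gport_valid_all vh (leqnn _))) /=.
by rewrite mem_gport_choices; lia.
Qed.

Lemma sum_outdeg (s : seq vertex) h : uniq s -> all (mem s) h -> \sum_(v <- s) outdeg h v = size h.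
Proof.
move=> us; elim/last_ind: h => [|h x IH]; first by rewrite big1.
rewrite all_rcons size_rcons => /andP[xs hs].
under eq_bigr => v _ do rewrite outdeg_rcons.
rewrite big_split /= IH // (eq_bigr (fun v => if v == x then 1 else 0)) => [|v _].
  by rewrite sumr_pred1_seq // ifT ?addn1.
by rewrite eq_sym; case: (v == x).
Qed.

Lemma uniq_gport_choices p N : uniq (gport_choices p N).
Proof.
rewrite /gport_choices cons_uniq mem_cat negb_or cat_uniq.
rewrite (map_inj_uniq inl_inj) (map_inj_uniq (@inr_inj nat nat)) !iota_uniq /= andbT.
apply/andP; split; first (apply/andP; split).
- by apply/mapP => -[k]; rewrite mem_iota => k1 [k0]; move: k1; rewrite -k0.
- by apply/mapP => -[].
- by apply/hasPn => x /mapP[k _ ->]; apply/mapP => -[].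
Qed.

Section AttachWeights.
Variables (R : realType) (alpha ell : R) (p : nat).
Local Open Scope ring_scope.

Definition colour_mass (m : nat) : R := m%:R * (alpha + 1) - 1.

Definition attach_weight h (v : vertex) : R :=
  (outdeg h v)%:R + (if v is inl _ then ell else alpha).

Lemma gport_transE h v :
  gport_trans alpha ell p h v = attach_weight h v / gport_C alpha ell p (size h).
Proof. by case: v. Qed.

Definition branch_weight h u : R :=
  \sum_(n <- iota 1 (size h) | branch h n == Some u) attach_weight h (inr n).

Lemma branch_weight_rcons h v u : gport_valid p h -> v \in gport_choices p (size h) ->
  (0 < u <= size h)%N ->
  branch_weight (rcons h v) u
  = branch_weight h u + (branch (rcons h v) (size h).+1 == Some u)%:R * (alpha + 1).
Proof.
move=> vh vin uh.
have v_new : (v == inr (size h).+1) = false.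
  by apply: contraTF vin => /eqP ->; rewrite mem_gport_choices ltnn andbF.
have weight_new : attach_weight (rcons h v) (inr (size h).+1) = alpha.
  by rewrite /attach_weight outdeg_rcons (outdeg_new vh (ltnSn _)) v_new add0r.
have edge_new : \sum_(n <- iota 1 (size h) | branch h n == Some u) (v == inr n)%:R
                = (branch (rcons h v) (size h).+1 == Some u)%:R :> R.
  rewrite (branch_new vh vin); case: v vin {v_new weight_new} => [[|k]|k] vin.
  - have -> : (Some (size h).+1 == Some u) = false by apply/eqP => -[]; lia.
    by rewrite big1.
  - by rewrite big1.
  - move: vin; rewrite mem_gport_choices => kh.
    rewrite big_mkcond (eq_bigr (fun n => if n == k then (branch h n == Some u)%:R else 0)).
      by rewrite sumr_pred1_seq ?iota_uniq // mem_iota ifT //; lia.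
    move=> n _; rewrite (inj_eq (@inr_inj _ _)) (eq_sym k).
    by case: (n == k); case: (_ == _).
have weight_old : \sum_(n <- iota 1 (size h) | branch (rcons h v) n == Some u)
                     attach_weight (rcons h v) (inr n)
    = \sum_(n <- iota 1 (size h) | branch h n == Some u)
        (attach_weight h (inr n) + (v == inr n)%:R).
  rewrite big_seq_cond [RHS]big_seq_cond; apply: eq_big => n; rewrite mem_iota.
  - by case/boolP: (1 <= n < 1 + size h)%N => //= nh; rewrite branch_rcons //; lia.
  - by move=> /andP[nh _]; rewrite /attach_weight outdeg_rcons natrD addrAC.
rewrite /branch_weight size_rcons iota1S big_rcons /= weight_new weight_old big_split /=.
by rewrite edge_new; case: (_ == Some u) => /=; ring.
Qed.

Lemma branch_weightE h u : gport_valid p h -> (0 < u <= size h)%N -> parent h u = root0 ->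
  branch_weight h u = colour_mass (branch_size h u).
Proof.
elim/last_ind: h u => [|h v IH] u; first by move=> _ /= /andP[? ?]; lia.
rewrite gport_valid_rcons size_rcons => /andP[vh vin] /andP[u0 uh] pu.
rewrite branch_size_rcons /colour_mass natrD.
have [eu|neu] := eqVneq u (size h).+1; last first.
  have uh' : (0 < u <= size h)%N by lia.
  rewrite parent_rcons // in pu.
  by rewrite branch_weight_rcons // IH // /colour_mass; ring.
move: pu; rewrite eu parent_new => pv; subst v.
rewrite branch_size_new /branch_weight size_rcons iota1S big_rcons /= (branch_new vh vin) eqxx.
rewrite big1_seq => [|n /andP[bn]]; last first.
  rewrite mem_iota => nh; move: bn; rewrite branch_rcons; last lia.
  by move=> /eqP /(branch_some (_ : 0 < n)%N) /andP[]; lia.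
by rewrite /attach_weight outdeg_rcons (outdeg_new vh (ltnSn _)) -[root0 == _]/false /=; ring.
Qed.

End AttachWeights.

(* [minn s j.+1] lumps the branches with more than [j] nodes into colour
   [j+1], together with the immigrant trees. *)
Definition attach_colour j h v : nat :=
  if attach_class h v is Some s then minn s j.+1 else j.+1.

Definition colour_hist j h : seq nat :=
  [seq attach_colour j (take i h) (nth root0 h i) | i <- iota 0 (size h)].

Lemma attach_colour_lt j h v : attach_colour j h v < j.+2.
Proof. by rewrite /attach_colour; case: attach_class => [s|] //; rewrite ltnS geq_minr. Qed.

Lemma size_colour_hist j h : size (colour_hist j h) = size h.
Proof. by rewrite size_map size_iota. Qed.

Lemma colour_hist_rcons j h v :
  colour_hist j (rcons h v) = rcons (colour_hist j h) (attach_colour j h v).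
Proof.
rewrite /colour_hist size_rcons -addn1 iotaD map_cat cats1 /= add0n; congr rcons.
  apply/eq_in_map => i; rewrite mem_iota /= => hi.
  by rewrite -cats1 takel_cat ?nth_cat ?hi //; apply: ltnW.
by rewrite -cats1 takel_cat // take_size nth_cat ltnn subnn.
Qed.

Lemma nth_colour_hist j h i : i < size h ->
  nth 0 (colour_hist j h) i = attach_colour j (take i h) (nth root0 h i).
Proof. by move=> hi; rewrite (nth_map 0) ?size_iota // nth_iota. Qed.

Lemma attach_class_colour j h v m : (0 < m <= j)%N ->
  ((attach_class h v == Some m) = (attach_colour j h v == m))
  * ((attach_class h v == Some m.-1) = ((attach_colour j h v).+1 == m)).
Proof.
rewrite /attach_colour => /andP[m0 mj]; case: (attach_class h v) => [s|].
  by rewrite -![Some s == _]/(s == _); split; apply/eqP/eqP; lia.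
by split; apply/esym/negbTE/eqP; lia.
Qed.

Lemma attach_colour_eq0 p j h v : v \in gport_choices p (size h) ->
  (attach_colour j h v == 0) = (v == root0).
Proof.
rewrite mem_gport_choices /attach_colour; case: v => [[|k]|n] //= vin.
case bn: (branch h n) => [u|//]; rewrite -[inr n == root0]/false.
by apply/negbTE/eqP; have := branch_size_gt0 vin bn; lia.
Qed.

Section ColourWeights.
Variables (R : realType) (alpha ell : R) (p j : nat).
Local Open Scope ring_scope.
Notation wt := (attach_weight alpha ell).

Lemma sum_attach_weight h : gport_valid p h ->
  \sum_(v <- gport_choices p (size h)) wt h v = gport_C alpha ell p (size h).
Proof.
move=> vh; rewrite /attach_weight big_split /= -natr_sum.
rewrite (sum_outdeg (uniq_gport_choices p _) (gport_valid_all vh (leqnn _))).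
rewrite /gport_choices big_cons big_cat !big_map /= !big_const_seq !iter_addr_0.
rewrite !count_predT !size_iota /gport_C -(mulr_natr ell) -(mulr_natr alpha).
by ring.
Qed.

Lemma sum_by_colour (s : seq vertex) h (X : vertex -> R) :
  \sum_(v <- s) X v = \sum_(c < j.+2) \sum_(v <- s | attach_colour j h v == c) X v.
Proof.
under [RHS]eq_bigr => c _ do rewrite big_mkcond.
rewrite exchange_big; apply: eq_bigr => v _.
under eq_bigr => c _ do rewrite eq_sym.
by rewrite sumr_ord_pred1 attach_colour_lt.
Qed.

Lemma sum_colour0 h :
  \sum_(v <- gport_choices p (size h) | attach_colour j h v == 0%N) wt h v = wt h root0.
Proof.
rewrite big_mkcond (eq_big_seq (fun v => if v == root0 then wt h v else 0)) => [|v vin].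
  by rewrite sumr_pred1_seq ?uniq_gport_choices // mem_gport_choices.
by rewrite (attach_colour_eq0 _ vin).
Qed.

Lemma sum_colour_mid h m : gport_valid p h -> (0 < m <= j)%N ->
  \sum_(v <- gport_choices p (size h) | attach_colour j h v == m) wt h v
  = (nbranches h m)%:R * colour_mass alpha m.
Proof.
move=> vh /andP[m0 mj].
set Q := fun u => (parent h u == root0) && (branch_size h u == m).
have -> : (nbranches h m)%:R * colour_mass alpha m
          = \sum_(u <- iota 1 (size h) | Q u) branch_weight alpha ell h u.
  rewrite big_seq_cond (eq_bigr (fun=> colour_mass alpha m)) => [|u /andP[]].
    by rewrite -big_seq_cond big_const_seq iter_addr_0 mulr_natl.
  rewrite mem_iota => uh /andP[/eqP pu /eqP su]; rewrite (branch_weightE _ _ vh) ?su //; lia.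
under [RHS]eq_bigr => u _ do rewrite /branch_weight big_mkcond.
rewrite exchange_big /gport_choices big_cons.
have -> : (attach_colour j h root0 == m) = false by rewrite /attach_colour /= eq_sym gtn_eqF.
rewrite big_cat !big_map /= big1_seq ?add0r => [|k /andP[/eqP ck]]; last first.
  by rewrite mem_iota; case: k ck => [|k] //; rewrite /attach_colour /= => ?; lia.
rewrite big_mkcond; apply: eq_big_seq => n; rewrite mem_iota => /andP[n0 nh].
rewrite /attach_colour /=; case bn: (branch h n) => [u0|]; last first.
  by rewrite big1 // ifF //; apply/eqP; lia.
have /andP[/andP[u00 u0n] pu0] := branch_some n0 bn.
rewrite big_mkcond (eq_bigr (fun u => if u == u0 then (if Q u then wt h (inr n) else 0) else 0)).
  have u0h : (1 <= u0 < 1 + size h)%N by lia.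
  rewrite sumr_pred1_seq ?iota_uniq // mem_iota u0h /Q pu0 /=.
  by congr (if _ then _ else _); apply/eqP/eqP; lia.
move=> u _; rewrite -[Some u0 == Some u]/(u0 == u) (eq_sym u0).
by case: (u == u0); case: (Q u).
Qed.
End ColourWeights.

Section UrnSteps.
Variables (R : realType) (alpha ell : R) (p j : nat).
Local Open Scope ring_scope.
Notation Z := (urn_state alpha ell p j).

Lemma urn_state_eq (u u' : seq nat) n :
  (forall i, (i < n)%N -> nth 0%N u i = nth 0%N u' i) -> Z u n = Z u' n.
Proof. by elim: n => [|n IH] uu' //=; rewrite uu' // IH // => i /ltnW /uu'. Qed.

Lemma urn_state_rcons (u : seq nat) c n : (n <= size u)%N -> Z (rcons u c) n = Z u n.
Proof.
by move=> nu; apply: urn_state_eq => i ni; rewrite nth_rcons (leq_trans ni nu).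
Qed.

Lemma urn_state_rcons_new (u : seq nat) c :
  Z (rcons u c) (size u).+1 = urn_step alpha ell p j (size u) c (Z u (size u)).
Proof. by rewrite /= urn_state_rcons // nth_rcons ltnn eqxx. Qed.

Lemma urn_step0 N c (z : nat -> R) : urn_step alpha ell p j N c z 0 = z 0%N + (c == 0%N)%:R.
Proof. by rewrite /urn_step andbF addr0; case: c => [|c] //=; case: ifP; rewrite addr0. Qed.

Lemma urn_step_mid N c (z : nat -> R) m : (c <= j.+1)%N -> (0 < m <= j)%N ->
  urn_step alpha ell p j N c z m
  = z m + ((c.+1 == m)%:R - (c == m)%:R) * colour_mass alpha m.
Proof.
move=> cj /andP[m0 mj]; rewrite /urn_step /colour_mass.
rewrite (_ : m == j.+1 = false) ?andbF ?addr0; last by apply/eqP; lia.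
rewrite (gtn_eqF m0) !(eq_sym _ m); case: c cj => [|c] cj /=; congr (_ + _).
  by case: (m =P 1%N) => [->|_] /=; rewrite ?(gtn_eqF m0) /=; ring.
have [em|mc1] := eqVneq m c.+1.
  by subst m; rewrite mj ltn_eqF //=; ring.
have [em|mc2] := eqVneq m c.+2.
  by subst m; rewrite (ltnW mj) ?eqxx ?gtn_eqF //=; ring.
by case: ifP => _ /=; ring.
Qed.

Lemma sum_urn_step N c (z : nat -> R) : (c <= j.+1)%N ->
  \sum_(i < j.+2) urn_step alpha ell p j N c z i
  = \sum_(i < j.+2) z i + (1 + alpha) + (if (p %| N.+1)%N then ell else 0).
Proof.
move=> cj; rewrite /urn_step !big_split /=; congr (_ + _ + _).
  case: c cj => [|c] cj /=; first by rewrite sumr_ord_pred2.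
  case: leqP => cj'; first by rewrite sumr_ord_pred1 ltnSn.
  have [lt1 lt2] : (c.+1 < j.+2)%N /\ (c.+2 < j.+2)%N by lia.
  rewrite (sumr_ord_pred2 _ _ _ (negbT (ltn_eqF (ltnSn c.+1)))) lt1 lt2.
  by rewrite -[c.+2%:R]natr1 -[c.+1%:R]natr1; ring.
case: (p %| N.+1)%N => /=; last by rewrite big1.
by rewrite sumr_ord_pred1 ltnSn.
Qed.
End UrnSteps.

Section Coupling.
Variables (R : realType) (alpha ell : R) (p j : nat).
Hypothesis p_gt0 : (0 < p)%N.
Local Open Scope ring_scope.
Notation wt := (attach_weight alpha ell).
Notation Z := (urn_state alpha ell p j).

Lemma urn_state_colour_hist h : gport_valid p h ->
  [/\ Z (colour_hist j h) (size h) 0 = wt h root0,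
      forall m, (0 < m <= j)%N ->
        Z (colour_hist j h) (size h) m = (nbranches h m)%:R * colour_mass alpha m
    & \sum_(i < j.+2) Z (colour_hist j h) (size h) i = gport_C alpha ell p (size h)].
Proof.
elim/last_ind: h => [|h v IH].
  move=> _; rewrite /= /urn_init /attach_weight /outdeg /= add0r; split=> //.
    by move=> m /andP[m0 _]; rewrite (gtn_eqF m0) /nbranches /= mul0r.
  rewrite (eq_bigr (fun i : 'I_j.+2 => if i == 0%N :> nat then ell else 0)) //.
  by rewrite sumr_ord_pred1 /gport_C div0n /=; ring.
rewrite gport_valid_rcons => /andP[vh vin]; have [Z0 Zm Zsum] := IH vh.
have cj := attach_colour_lt j h v.
rewrite size_rcons colour_hist_rcons -(size_colour_hist j h) urn_state_rcons_new size_colour_hist.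
set c := attach_colour j h v; split.
- by rewrite urn_step0 Z0 /attach_weight outdeg_rcons natrD addrAC /c (attach_colour_eq0 _ vin).
- move=> m mj; rewrite urn_step_mid // Zm //.
  have [class_m class_pred] := attach_class_colour h v mj.
  have := nbranches_rcons vh vin (proj1 (andP mj)); rewrite class_m class_pred -/c => E.
  have -> : (nbranches (rcons h v) m)%:R = (nbranches h m)%:R + (c.+1 == m)%:R - (c == m)%:R :> R.
    by rewrite -natrD -E natrD addrK.
  by ring.
- rewrite sum_urn_step // Zsum /gport_C divnS // natrD -addn1 natrD.
  by case: (p %| size h + 1)%N => /=; ring.
Qed.

Lemma sum_colour h c : gport_valid p h -> (c < j.+2)%N ->
  \sum_(v <- gport_choices p (size h) | attach_colour j h v == c) wt h v
  = Z (colour_hist j h) (size h) c.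
Proof.
move=> vh cj; have [Z0 Zm Zsum] := urn_state_colour_hist vh.
have below c' : (c' < j.+1)%N ->
    \sum_(v <- gport_choices p (size h) | attach_colour j h v == c') wt h v
    = Z (colour_hist j h) (size h) c'.
  case: c' => [_|c' c'j]; first by rewrite sum_colour0 Z0.
  by rewrite sum_colour_mid ?Zm.
have [|cj'] := ltnP c j.+1; first exact: below.
have -> : c = j.+1 by lia.
have := sum_attach_weight alpha ell vh; rewrite (sum_by_colour j _ h) -Zsum.
rewrite [X in X = _ -> _]big_ord_recr [X in _ = X -> _]big_ord_recr /=.
under eq_bigr => i _ do rewrite below //.
by move/addrI.
Qed.

Lemma gport_weight_rcons h v :
  gport_weight alpha ell p (rcons h v) = gport_weight alpha ell p h * gport_trans alpha ell p h v.
Proof.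
rewrite /gport_weight size_rcons big_ord_recr /= -cats1 take_size_cat // nth_cat ltnn subnn.
congr (_ * _); apply: eq_bigr => i _.
by rewrite takel_cat ?nth_cat ?ltn_ord //; apply: ltnW.
Qed.

Lemma urn_weight_rcons u c : urn_weight alpha ell p j (rcons u c)
  = urn_weight alpha ell p j u * (Z u (size u) c / \sum_(i < j.+2) Z u (size u) i).
Proof.
rewrite /urn_weight size_rcons big_ord_recr /= urn_state_rcons // nth_rcons ltnn eqxx.
congr (_ * _); apply: eq_bigr => i _ /=.
by rewrite urn_state_rcons ?nth_rcons ?ltn_ord //; apply: ltnW.
Qed.

Lemma gport_colour_hist_law N (F : seq nat -> R) :
  \sum_(h <- gport_hists p N) gport_weight alpha ell p h * F (colour_hist j h)
  = \sum_(u <- urn_hists j N) urn_weight alpha ell p j u * F u.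
Proof.
elim: N F => [|N IH] F; first by rewrite !big_seq1 /gport_weight /urn_weight !big_ord0.
pose G u := \sum_(c < j.+2) (Z u (size u) c / \sum_(i < j.+2) Z u (size u) i) * F (rcons u c).
have -> : gport_hists p N.+1 = flatten [seq [seq rcons h v | v <- gport_choices p N]
                                           | h <- gport_hists p N] by [].
have -> : urn_hists j N.+1 = flatten [seq [seq rcons u c | c <- iota 0 j.+2]
                                         | u <- urn_hists j N] by [].
rewrite !big_flatten !big_map.
transitivity (\sum_(h <- gport_hists p N) gport_weight alpha ell p h * G (colour_hist j h)).
  apply: eq_big_seq => h /gport_hists_valid [<- vh]; rewrite big_map.
  under eq_bigr => v _ do rewrite gport_weight_rcons colour_hist_rcons -mulrA.
  rewrite -big_distrr /= (sum_by_colour j _ h) /G size_colour_hist; congr (_ * _).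
  apply: eq_bigr => c _; under eq_bigr => v /eqP -> do rewrite gport_transE.
  have [_ _ <-] := urn_state_colour_hist vh.
  by rewrite -!big_distrl /= sum_colour.
rewrite IH; apply: eq_bigr => u _.
rewrite big_map -[iota 0 j.+2]/(index_iota 0 j.+2) big_mkord /G big_distrr.
by apply: eq_bigr => c _; rewrite urn_weight_rcons -[RHS]mulrA.
Qed.
End Coupling.

Local Open Scope ring_scope.

Lemma gport_traj_colour_hist (R : realType) (alpha ell : R) p j h :
  (0 < p)%N -> 0 < alpha -> gport_valid p h ->
  gport_traj R j h = urn_traj alpha ell p j (colour_hist j h).
Proof.
move=> p_gt0 alpha_gt0 vh.
rewrite /gport_traj /urn_traj size_colour_hist; apply/eq_in_map => n.
rewrite mem_iota => /andP[_ nh]; apply/eq_in_map => m; rewrite mem_iota => /andP[m0 mj].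
have vt := gport_valid_take n vh.
have st : size (take n h) = n by apply: size_takel; lia.
have -> : urn_state alpha ell p j (colour_hist j h) n
          = urn_state alpha ell p j (colour_hist j (take n h)) n.
  apply: urn_state_eq => i ni.
  by rewrite !nth_colour_hist ?st ?take_takel ?nth_take //; lia.
have [_ Zm _] := urn_state_colour_hist alpha ell j p_gt0 vt; rewrite st in Zm.
rewrite Zm; last lia.
rewrite /colour_mass mulfK ?(gport_B_nbranches m vt) //.
have m1 : 1 <= m%:R :> R by rewrite ler1n.
by apply/eqP => E; nra.
Qed.

Theorem mainTheorem12 (R : realType) (j p : nat) (alpha ell : R)
  (hj : (1 <= j)%N) (halpha : 0 < alpha) (hell : 0 < ell) (hp : (0 < p)%N) :
  forall (N : nat) (t : seq (seq R)),
    \sum_(h <- gport_hists p N | gport_traj R j h == t) gport_weight alpha ell p h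
    = \sum_(h <- urn_hists j N | urn_traj alpha ell p j h == t)
        urn_weight alpha ell p j h.
Proof.
move=> N t; rewrite big_mkcond [RHS]big_mkcond.
under eq_bigr => h _ do rewrite -mulrb -mulr_natr.
under [RHS]eq_bigr => u _ do rewrite -mulrb -mulr_natr.
have /= <- := gport_colour_hist_law alpha ell j hp N (fun u => (urn_traj alpha ell p j u == t)%:R).
apply: eq_big_seq => h /gport_hists_valid [_ vh].
by rewrite (gport_traj_colour_hist ell j hp halpha vh).
Qed.
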